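(* Let $1\le k<N/2$. Any quantum algorithm that, for every unknown $x\in\{0,1\}^N$ with $wt(x)=k$, finds $x$ with bounded error using the quasi B-oracle for $x$ needs $\Omega(k^{1/4})$ queries.
   Context: For $x,q\in\{0,1\}^N$ let $x\wedge q$ be the bitwise AND and $wt$ the Hamming weight. The quasi B-oracle is a stochastic oracle with random answer $\zeta(x;q)\in\{0,1\}$ where $\Pr[\zeta(x;q)=0]=0$ if $wt(x\wedge q)$ is odd, $\Pr[\zeta(x;q)=0]=\sqrt{1/wt(x\wedge q)}$ if $wt(x\wedge q)$ is positive and even, and $\Pr[\zeta(x;q)=0]=1$ if $wt(x\wedge q)=0$. It is accessed through the unitary $\tilde O_x|q,a,z\rangle=\sqrt{\Pr[\zeta(x;q)=0]}\,|q,a,z\rangle+(-1)^a\sqrt{\Pr[\zeta(x;q)=1]}\,|q,a\oplus1,z\rangle$, where $a$ is a one-bit answer register and $z$ a workspace register. Bounded error: output equals $x$ with probability at least a constant such as $2/3$. *)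

From HB Require Import structures.
From mathcomp Require Import all_boot all_order all_algebra.
From mathcomp Require Import reals.
From mathcomp Require Import complex.
Set Implicit Arguments. Unset Strict Implicit. Unset Printing Implicit Defensive.
Import Order.TTheory GRing.Theory Num.Theory.
Local Open Scope ring_scope.

Definition bits (N : nat) := {ffun 'I_N -> bool}.

Definition wt N (x : bits N) : nat := #|[set i | x i]|.

Definition wtand N (x q : bits N) : nat := #|[set i | x i && q i]|.

(* Pr[zeta(x;q) = 0] for the quasi B-oracle. *)
Definition pr0 (R : realType) N (x q : bits N) : R :=
  let w := wtand x q in
  if odd w then 0
  else if w == 0%N then 1
  else Num.sqrt (w%:R^-1).

(* Basis states |q, a, z> : query register, one-bit answer register,
   workspace register of dimension W.+1 (so that the state |0,0,0> exists). *)
Definition basis N W := (bits N * bool * 'I_W.+1)%type.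

(* Operators on C^{basis}: op s t = <s| U |t>. *)
Definition op (R : realType) N W := basis N W -> basis N W -> R[i].
Definition state (R : realType) N W := basis N W -> R[i].

Definition apply (R : realType) N W (U : op R N W) (v : state R N W) : state R N W :=
  fun s => \sum_(t : basis N W) U s t * v t.

Definition unitary (R : realType) N W (U : op R N W) : Prop :=
  forall s s' : basis N W,
    \sum_(t : basis N W) U s t * conjc (U s' t) = (s == s')%:R.

Definition realC (R : realType) (r : R) : R[i] := Complex r 0.

(* The quasi B-oracle unitary:
   O_x |q,a,z> = sqrt(p0) |q,a,z> + (-1)^a sqrt(p1) |q,a xor 1,z>. *)
Definition qB_oracle (R : realType) N W (x : bits N) : op R N W :=
  fun s t =>
    let: (q', a', z') := s in
    let: (q, a, z) := t in
    if (q' == q) && (z' == z) then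
      if a' == a then realC (Num.sqrt (pr0 R x q))
      else realC ((-1) ^+ a * Num.sqrt (1 - pr0 R x q))
    else 0.

Definition init_state (R : realType) N W : state R N W :=
  fun s => ((s == ([ffun => false], false, ord0)) : bool)%:R.

Fixpoint run (R : realType) N W (x : bits N) (U : nat -> op R N W) (T : nat)
  : state R N W :=
  match T with
  | 0%N => @apply R N W (U 0%N) (@init_state R N W)
  | T'.+1 => @apply R N W (U T) (@apply R N W (@qB_oracle R N W x) (@run R N W x U T'))
  end.

Definition sqnorm (R : realType) (z : R[i]) : R := complex.Re z ^+ 2 + complex.Im z ^+ 2.

(* Probability that measuring the final state in the computational basis and
   post-processing the outcome with [out] yields x. *)
Definition success_prob (R : realType) N W (x : bits N) (U : nat -> op R N W)
  (T : nat) (out : basis N W -> bits N) : R :=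
  \sum_(s : basis N W | out s == x) sqnorm (run x U T s).

(* Adversary argument.  Call two inputs of weight k adjacent when one is
   obtained from the other by moving a single one, and let the progress after
   t queries be the sum, over adjacent pairs (x, y), of the real overlap of the
   states reached on x and on y.  It starts at the number Z of pairs, and it
   must end below 17/18 Z, since every pair is distinguished with probability
   2/3.  On each block (q, a, z), a = 0, 1, the quasi B-oracle is a plane
   rotation depending only on w = wt (x /\ q), and for adjacent inputs w changes
   by at most one.  One of two consecutive weights is odd, where the answer is
   deterministic, and the other has Pr[zeta = 0] <= w^-1/2, so the two
   rotations are O(w^-1/4) apart.  Spreading the change of each overlap over
   the queries with balanced weights (as in the weighted adversary method),
   one query decreases the progress by at most 4 k^-1/4 Z, so T >= k^1/4 / 72. *)

From HB Require Import structures.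
From mathcomp Require Import all_boot all_order all_algebra.
From mathcomp Require Import reals.
From mathcomp Require Import complex.
From mathcomp Require Import ring lra zify.
Set Implicit Arguments. Unset Strict Implicit. Unset Printing Implicit Defensive.
Import Order.TTheory GRing.Theory Num.Theory.
Local Open Scope ring_scope.

Section InnerProduct.
Variables (R : realType) (N W : nat).
Local Notation S := (basis N W).
Implicit Types (U : op R N W) (u v : state R N W).

Lemma unitary_orthonormal_cols U : unitary U ->
  forall t t' : S, \sum_(s : S) conjc (U s t) * U s t' = (t == t')%:R.
Proof.
move=> HU t t'.
pose A : 'M[R[i]]_#|{: S}| := \matrix_(i, j) U (enum_val i) (enum_val j).
pose B : 'M[R[i]]_#|{: S}| := \matrix_(i, j) conjc (U (enum_val j) (enum_val i)).
have AB : A *m B = 1%:M.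
  apply/matrixP => i j; rewrite !mxE.
  under eq_bigr do rewrite !mxE.
  rewrite -(big_enum_val (fun l => U (enum_val i) l * conjc (U (enum_val j) l))) /=.
  by rewrite (eq_bigl predT) // HU (inj_eq enum_val_inj).
move/matrixP: (mulmx1C AB) => /(_ (enum_rank t) (enum_rank t')).
rewrite !mxE /= (inj_eq enum_rank_inj) => <-.
rewrite (big_enum_val (fun s => conjc (U s t) * U s t')) /= (eq_bigl predT) //.
by apply: eq_bigr => l _; rewrite !mxE !enum_rankK.
Qed.

Definition dotc u v : R[i] := \sum_(s : S) conjc (u s) * v s.

Definition dotr u v : R :=
  \sum_(s : S) (complex.Re (u s) * complex.Re (v s) + complex.Im (u s) * complex.Im (v s)).

Lemma Re_dotc u v : complex.Re (dotc u v) = dotr u v.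
Proof.
rewrite /dotc (raddf_sum (@complex.Re R : Rcomplex R -> R)).
by apply: eq_bigr => s _; case: (u s) => ? ?; case: (v s) => ? ? /=; ring.
Qed.

Lemma dotc_unitary U u v : unitary U -> dotc (apply U u) (apply U v) = dotc u v.
Proof.
move=> /unitary_orthonormal_cols HC; rewrite /dotc /apply.
transitivity (\sum_(t : S) \sum_(t' : S)
                conjc (u t) * v t' * \sum_(s : S) conjc (U s t) * U s t').
  under eq_bigr => s _ do rewrite rmorph_sum mulr_suml.
  rewrite exchange_big; apply: eq_bigr => t _.
  under eq_bigr => s _ do rewrite rmorphM mulr_sumr.
  rewrite exchange_big; apply: eq_bigr => t' _.
  by rewrite mulr_sumr; apply: eq_bigr => s _; ring.
apply: eq_bigr => t _; under eq_bigr => t' _ do rewrite HC.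
rewrite (bigD1 t) //= eqxx mulr1 big1 ?addr0 // => t' /negbTE nt.
by rewrite eq_sym nt mulr0.
Qed.

Lemma dotr_unitary U u v : unitary U -> dotr (apply U u) (apply U v) = dotr u v.
Proof. by move=> HU; rewrite -!Re_dotc dotc_unitary. Qed.

End InnerProduct.

Section RealInequalities.
Variable R : realType.

Lemma two_norm_le_add (p X Y : R) :
  0 <= X -> 0 <= Y -> p ^+ 2 <= X * Y -> 2 * `|p| <= X + Y.
Proof.
move=> X0 Y0 hp; have n0 := normr_ge0 p.
have hn : `|p| ^+ 2 <= X * Y by rewrite real_normK ?num_real.
have := sqr_ge0 (X - Y); nra.
Qed.

Lemma cauchy_schwarz4 (a0 a1 a2 a3 w0 w1 w2 w3 : R) :
  (a0 * w0 + a1 * w1 + a2 * w2 + a3 * w3) ^+ 2 <=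
  (a0 ^+ 2 + a1 ^+ 2 + a2 ^+ 2 + a3 ^+ 2) * (w0 ^+ 2 + w1 ^+ 2 + w2 ^+ 2 + w3 ^+ 2).
Proof.
rewrite -subr_ge0.
have -> : (a0 ^+ 2 + a1 ^+ 2 + a2 ^+ 2 + a3 ^+ 2) * (w0 ^+ 2 + w1 ^+ 2 + w2 ^+ 2 + w3 ^+ 2)
  - (a0 * w0 + a1 * w1 + a2 * w2 + a3 * w3) ^+ 2 =
  (a0 * w1 - a1 * w0) ^+ 2 + (a0 * w2 - a2 * w0) ^+ 2 + (a0 * w3 - a3 * w0) ^+ 2 +
  (a1 * w2 - a2 * w1) ^+ 2 + (a1 * w3 - a3 * w1) ^+ 2 + (a2 * w3 - a3 * w2) ^+ 2 by ring.
by rewrite !addr_ge0 ?sqr_ge0.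
Qed.

(* [rot_gap c1 s1 c2 s2] is the squared distance between the plane rotations
   with cosines c1, c2 and sines s1, s2.  In [rotation_dot_change] they act on
   the planes (a0, a1), (a2, a3) and (b0, b1), (b2, b3) respectively. *)
Definition rot_gap (c1 s1 c2 s2 : R) : R :=
  ((c1 * c2 + s1 * s2) - 1) ^+ 2 + (s1 * c2 - c1 * s2) ^+ 2.

Lemma rot_gap_ge0 c1 s1 c2 s2 : 0 <= rot_gap c1 s1 c2 s2.
Proof. by rewrite addr_ge0 ?sqr_ge0. Qed.

Lemma rotation_dot_change (c1 s1 c2 s2 a0 a1 a2 a3 b0 b1 b2 b3 r r' : R) :
  0 <= r -> 0 <= r' -> rot_gap c1 s1 c2 s2 <= r * r' ->
  2 * `| ((c1*a0 - s1*a1)*(c2*b0 - s2*b1) + (c1*a1 + s1*a0)*(c2*b1 + s2*b0) - (a0*b0 + a1*b1))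
       + ((c1*a2 - s1*a3)*(c2*b2 - s2*b3) + (c1*a3 + s1*a2)*(c2*b3 + s2*b2) - (a2*b2 + a3*b3)) |
  <= r * (a0^+2 + a1^+2 + a2^+2 + a3^+2) + r' * (b0^+2 + b1^+2 + b2^+2 + b3^+2).
Proof.
move=> r0 r'0 hD.
(* The change is <a, w> with w = (R1^T R2 - 1) b, and |w|^2 = rot_gap * |b|^2. *)
set C := c1 * c2 + s1 * s2; set Sn := s1 * c2 - c1 * s2.
set w0 := (C - 1) * b0 + Sn * b1; set w1 := (C - 1) * b1 - Sn * b0.
set w2 := (C - 1) * b2 + Sn * b3; set w3 := (C - 1) * b3 - Sn * b2.
set A := a0^+2 + a1^+2 + a2^+2 + a3^+2; set B := b0^+2 + b1^+2 + b2^+2 + b3^+2.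
have -> : ((c1*a0 - s1*a1)*(c2*b0 - s2*b1) + (c1*a1 + s1*a0)*(c2*b1 + s2*b0) - (a0*b0 + a1*b1))
       + ((c1*a2 - s1*a3)*(c2*b2 - s2*b3) + (c1*a3 + s1*a2)*(c2*b3 + s2*b2) - (a2*b2 + a3*b3))
    = a0 * w0 + a1 * w1 + a2 * w2 + a3 * w3 by rewrite /w0 /w1 /w2 /w3 /C /Sn; ring.
have hw : w0^+2 + w1^+2 + w2^+2 + w3^+2 = rot_gap c1 s1 c2 s2 * B.
  by rewrite /w0 /w1 /w2 /w3 /C /Sn /rot_gap /B; ring.
have A0 : 0 <= A by rewrite !addr_ge0 ?sqr_ge0.
have B0 : 0 <= B by rewrite !addr_ge0 ?sqr_ge0.
apply: two_norm_le_add; rewrite ?mulr_ge0 //.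
apply: (le_trans (cauchy_schwarz4 _ _ _ _ _ _ _ _)); rewrite -/A hw.
have -> : r * A * (r' * B) = A * ((r * r') * B) by ring.
by rewrite ler_wpM2l // ler_wpM2r.
Qed.

End RealInequalities.

Section Oracle.
Variables (R : realType) (N W : nat).
Local Notation S := (basis N W).
Implicit Types (x y q : bits N) (u v : state R N W).

Lemma qB_oracle_apply x u q a z :
  apply (qB_oracle R x) u (q, a, z) =
    realC (Num.sqrt (pr0 R x q)) * u (q, a, z) +
    realC ((-1) ^+ (~~ a) * Num.sqrt (1 - pr0 R x q)) * u (q, ~~ a, z).
Proof.
rewrite /apply (eq_bigr (fun t =>
   (if t == (q, a, z) then realC (Num.sqrt (pr0 R x q)) * u t else 0) +
   (if t == (q, ~~ a, z) then realC ((-1) ^+ (~~ a) * Num.sqrt (1 - pr0 R x q)) * u t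
    else 0))); first by rewrite big_split /= -!big_mkcond !big_pred1_eq.
move=> -[[q' a'] z'] _; rewrite /qB_oracle !xpair_eqE.
case: (eqVneq q q') => [<-|_]; last by rewrite /= mul0r addr0.
case: (eqVneq z z') => [<-|_]; last by rewrite !andbF /= mul0r addr0.
by case: a; case: a' => /=; rewrite ?mul0r ?addr0 ?add0r.
Qed.

Lemma sum_basisE (F : S -> R) :
  \sum_(s : S) F s =
  \sum_(q : bits N) \sum_(z : 'I_W.+1) (F (q, false, z) + F (q, true, z)).
Proof.
rewrite (eq_bigr (fun s : S => F (s.1, s.2))); last by case.
rewrite -(pair_bigA _ (fun p z => F (p, z))) /=.
rewrite (eq_bigr (fun p => \sum_(z : 'I_W.+1) F ((p.1, p.2), z))); last by case.
rewrite -(pair_bigA _ (fun q a => \sum_(z : 'I_W.+1) F ((q, a), z))) /=.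
apply: eq_bigr => q _; rewrite big_bool -big_split /=.
by apply: eq_bigr => z _; rewrite addrC.
Qed.

Definition block_norm u q (z : 'I_W.+1) : R :=
  sqnorm (u (q, false, z)) + sqnorm (u (q, true, z)).

Lemma block_norm_ge0 u q z : 0 <= block_norm u q z.
Proof. by rewrite /block_norm /sqnorm !addr_ge0 ?sqr_ge0. Qed.

Lemma dotr_block_norm u : dotr u u = \sum_(q : bits N) \sum_(z : 'I_W.+1) block_norm u q z.
Proof.
rewrite /dotr sum_basisE; apply: eq_bigr => q _; apply: eq_bigr => z _.
by rewrite /block_norm /sqnorm !expr2.
Qed.

(* On each block (q, z) the oracle is the rotation with cosine sqrt (pr0 x q). *)
Definition oracle_gap (p1 p2 : R) : R :=
  rot_gap (Num.sqrt p1) (Num.sqrt (1 - p1)) (Num.sqrt p2) (Num.sqrt (1 - p2)).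

Lemma dotr_oracle_change x y u v (rho rho' : bits N -> R) :
  (forall q, 0 <= rho q) -> (forall q, 0 <= rho' q) ->
  (forall q, oracle_gap (pr0 R x q) (pr0 R y q) <= rho q * rho' q) ->
  2 * `|dotr (apply (qB_oracle R x) u) (apply (qB_oracle R y) v) - dotr u v| <=
   \sum_(q : bits N) \sum_(z : 'I_W.+1) (rho q * block_norm u q z + rho' q * block_norm v q z).
Proof.
move=> r0 r'0 hgap; rewrite /dotr -sumrB sum_basisE.
apply: (le_trans (ler_wpM2l _ (ler_norm_sum _ _ _))) => //.
rewrite mulr_sumr; apply: ler_sum => q _.
apply: (le_trans (ler_wpM2l _ (ler_norm_sum _ _ _))) => //.
rewrite mulr_sumr; apply: ler_sum => z _.
rewrite !qB_oracle_apply /block_norm /sqnorm.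
case: (u (q, false, z)) => a0 a2; case: (u (q, true, z)) => a1 a3.
case: (v (q, false, z)) => b0 b2; case: (v (q, true, z)) => b1 b3 /=.
have := rotation_dot_change a0 a1 a2 a3 b0 b1 b2 b3 (r0 q) (r'0 q) (hgap q).
by congr (_ <= _); [congr (_ * `|_|) | ]; ring.
Qed.

End Oracle.

Section ZeroProbability.
Variable R : realType.

Definition prob0 (w : nat) : R :=
  if odd w then 0 else if w == 0%N then 1 else Num.sqrt (w%:R^-1).

Lemma pr0E N (x q : bits N) : pr0 R x q = prob0 (wtand x q).
Proof. by []. Qed.

Lemma prob0_ge0 w : 0 <= prob0 w.
Proof. by rewrite /prob0; case: odd => //; case: eqP => // _; exact: sqrtr_ge0. Qed.

Lemma prob0_le1 w : prob0 w <= 1.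
Proof.
rewrite /prob0; case: odd => //; case: eqP => // /eqP w0.
by rewrite -[X in _ <= X]sqrtr1 ler_sqrt // invf_le1 ?ler1n ?ltr0n ?lt0n.
Qed.

Lemma pr0_range N (x q : bits N) : 0 <= pr0 R x q <= 1.
Proof. by rewrite pr0E prob0_ge0 prob0_le1. Qed.

Lemma oracle_gapC (p1 p2 : R) : oracle_gap p1 p2 = oracle_gap p2 p1.
Proof. by rewrite /oracle_gap /rot_gap; ring. Qed.

Lemma oracle_gapxx (p : R) : 0 <= p <= 1 -> oracle_gap p p = 0.
Proof.
case/andP=> p0 p1; rewrite /oracle_gap /rot_gap -!expr2 !sqr_sqrtr ?subr_ge0 //.
by rewrite mulrC subrr; ring.
Qed.

Lemma oracle_gap0p (p : R) : 0 <= p <= 1 -> oracle_gap 0 p <= 2 * p.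
Proof.
case/andP=> p0 p1; rewrite /oracle_gap /rot_gap sqrtr0 subr0 sqrtr1.
have hs : Num.sqrt (1 - p) ^+ 2 = 1 - p by rewrite sqr_sqrtr // subr_ge0.
have hc := sqr_sqrtr p0.
have s0 := sqrtr_ge0 (1 - p).
have s1 : Num.sqrt (1 - p) <= 1 by rewrite -[X in _ <= X]sqrtr1 ler_sqrt //; lra.
set s := Num.sqrt (1 - p) in hs s0 s1 *; set c := Num.sqrt p in hc *.
have -> : (0 * c + 1 * s - 1) ^+ 2 + (1 * c - 0 * s) ^+ 2 = s^+2 + c^+2 - 2 * s + 1 by ring.
rewrite hs hc; nra.
Qed.

Lemma sqrtrV_mul (a : R) : 0 < a -> Num.sqrt (a^-1) * Num.sqrt a = 1.
Proof. by move=> a0; rewrite -sqrtrM ?invr_ge0 ?ltW // mulVf ?gt_eqF // sqrtr1. Qed.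

(* The oracle answers for consecutive weights w, w.+1 are at rotation distance
   O(w^-1/4): one of them is the deterministic answer 1 (odd weight), the other
   has Pr[zeta = 0] of order w^-1/2. *)
Lemma oracle_gap_prob0S w : oracle_gap (prob0 w) (prob0 w.+1) * Num.sqrt (w.+1%:R) <= 4.
Proof.
have prob0_range v : 0 <= prob0 v <= 1 by rewrite prob0_ge0 prob0_le1.
have sq0 := sqrtr_ge0 (w.+1%:R : R).
case: (boolP (odd w)) => hw.
  have -> : prob0 w = 0 by rewrite /prob0 hw.
  have e1 : prob0 w.+1 = Num.sqrt (w.+1%:R^-1) by rewrite /prob0 /= hw.
  apply: (le_trans (ler_wpM2r sq0 (oracle_gap0p (prob0_range w.+1)))).
  by rewrite e1 -mulrA sqrtrV_mul ?ltr0n //; lra.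
have -> : prob0 w.+1 = 0 by rewrite /prob0 /= hw.
rewrite oracle_gapC; apply: (le_trans (ler_wpM2r sq0 (oracle_gap0p (prob0_range w)))).
case: (eqVneq w 0%N) => [->|w0]; first by rewrite /prob0 /= sqrtr1; lra.
rewrite /prob0 (negbTE hw) (negbTE w0) -mulrA -sqrtrM ?invr_ge0 ?ler0n //.
have wp : (0 : R) < w%:R by rewrite ltr0n lt0n.
have r4 : w%:R^-1 * w.+1%:R <= 4 :> R.
  rewrite mulrC -ler_pdivlMr ?invr_gt0 // invrK -natr1.
  have : (1 : R) <= w%:R by rewrite ler1n lt0n.
  lra.
have r0 : 0 <= w%:R^-1 * w.+1%:R :> R by rewrite mulr_ge0 ?invr_ge0 ?ler0n.
have hs := sqr_sqrtr r0; have s0 := sqrtr_ge0 (w%:R^-1 * w.+1%:R : R).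
set s := Num.sqrt _ in hs s0 *.
have : s <= 2 by nra.
lra.
Qed.

End ZeroProbability.

Section RunNorm.
Variables (R : realType) (N W : nat).

Lemma dotr_init : dotr (@init_state R N W) (@init_state R N W) = 1.
Proof.
rewrite /dotr (bigD1 ([ffun => false], false, ord0)) //= big1 => [|s /negbTE ns].
  by rewrite /init_state eqxx /=; ring.
by rewrite /init_state ns /=; ring.
Qed.

Lemma dotr_qB_oracle (x : bits N) (u : state R N W) :
  dotr (apply (qB_oracle R x) u) (apply (qB_oracle R x) u) = dotr u u.
Proof.
have := @dotr_oracle_change R N W x x u u (fun _ => 0) (fun _ => 0).
have gap0 q : oracle_gap (pr0 R x q) (pr0 R x q) <= 0 * 0.
  by rewrite oracle_gapxx ?pr0_range // mulr0.
move=> /(_ (fun _ => lexx 0) (fun _ => lexx 0) gap0).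
rewrite big1 => [H|q _]; last by rewrite big1 // => z _; rewrite !mul0r addr0.
apply/eqP; rewrite -subr_eq0 -normr_eq0 eq_le normr_ge0 andbT.
by rewrite -(ler_pM2l (_ : (0 : R) < 2)) // mulr0.
Qed.

Lemma dotr_run (x : bits N) (U : nat -> op R N W) t :
  (forall i, (i <= t)%N -> unitary (U i)) -> dotr (run x U t) (run x U t) = 1.
Proof.
elim: t => [|t IH] HU /=; first by rewrite dotr_unitary ?dotr_init //; apply: HU.
rewrite dotr_unitary ?dotr_qB_oracle ?IH // => [i it|]; apply: HU => //.
exact: leqW.
Qed.

End RunNorm.

Section Distinguish.
Variables (R : realType) (N W : nat).
Local Notation S := (basis N W).

Lemma dotr_le_of_distinguished (u v : state R N W) (out : S -> bits N) (x y : bits N) :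
  x != y -> dotr u u = 1 -> dotr v v = 1 ->
  2/3 <= \sum_(s | out s == x) sqnorm (u s) ->
  2/3 <= \sum_(s | out s == y) sqnorm (v s) ->
  dotr u v <= 17/18.
Proof.
move=> nxy nu nv hx hy.
have amgm (a b : R) : 2 * (a * b) <= 2/3 * a^+2 + 3/2 * b^+2.
  by have := sqr_ge0 (a - 3/2 * b); nra.
have dotrE (w : state R N W) : dotr w w = \sum_s sqnorm (w s).
  by apply: eq_bigr => s _; rewrite /sqnorm !expr2.
have hu := nu; rewrite dotrE (bigID (fun s => out s == x)) /= in hu.
have hv := nv; rewrite dotrE (bigID (fun s => out s == x)) /= in hv.
have hy' : \sum_(s | out s == y) sqnorm (v s) <= \sum_(s | out s != x) sqnorm (v s).
  rewrite [X in _ <= X]big_mkcond [X in X <= _]big_mkcond /=; apply: ler_sum => s _.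
  case: (eqVneq (out s) y) => [->|_]; last by case: ifP => // _; rewrite addr_ge0 ?sqr_ge0.
  by rewrite eq_sym nxy.
rewrite /dotr (bigID (fun s => out s == x)) /=.
have b1 : \sum_(s | out s == x)
    (complex.Re (u s) * complex.Re (v s) + complex.Im (u s) * complex.Im (v s))
  <= 1/3 * \sum_(s | out s == x) sqnorm (u s) + 3/4 * \sum_(s | out s == x) sqnorm (v s).
  rewrite !mulr_sumr -big_split /=; apply: ler_sum => s _; rewrite /sqnorm.
  have := amgm (complex.Re (u s)) (complex.Re (v s)).
  have := amgm (complex.Im (u s)) (complex.Im (v s)); lra.
have b2 : \sum_(s | out s != x)
    (complex.Re (u s) * complex.Re (v s) + complex.Im (u s) * complex.Im (v s))
  <= 3/4 * \sum_(s | out s != x) sqnorm (u s) + 1/3 * \sum_(s | out s != x) sqnorm (v s).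
  rewrite !mulr_sumr -big_split /=; apply: ler_sum => s _; rewrite /sqnorm.
  have := amgm (complex.Re (v s)) (complex.Re (u s)).
  have := amgm (complex.Im (v s)) (complex.Im (u s)); lra.
lra.
Qed.

End Distinguish.

Section MoveBit.
Variable N : nat.
Implicit Types (x q : bits N) (i j l : 'I_N) (P : pred 'I_N).
Local Open Scope nat_scope.

Definition move_bit x i j : bits N :=
  [ffun l => if l == i then false else if l == j then true else x l].

Definition negbits x : bits N := [ffun l => ~~ x l].

Definition wt_in x P : nat := #|[set l | x l && P l]|.

Lemma wt_inE x P : wt_in x P = \sum_l (x l && P l).
Proof.
rewrite /wt_in cardsE -sum1_card big_mkcond /=.
by apply: eq_bigr => l _; rewrite unfold_in; case: (x l && P l).
Qed.

Lemma wt_in_ext x P P' : P =1 P' -> wt_in x P = wt_in x P'.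
Proof. by move=> eP; apply: eq_card => l; rewrite !inE eP. Qed.

Lemma wt_in_gt0 x P l : x l -> P l -> 0 < wt_in x P.
Proof. by move=> xl Pl; apply/card_gt0P; exists l; rewrite inE xl Pl. Qed.

Lemma wt_in_split x P : wt_in x P + wt_in x (predC P) = wt_in x predT.
Proof.
rewrite !wt_inE -big_split /=; apply: eq_bigr => l _.
by case: (x l); case: (P l).
Qed.

Lemma wt_wt_in x : wt x = wt_in x predT.
Proof. by apply: eq_card => l; rewrite !inE andbT. Qed.

Lemma wt_in_negbits x P : wt_in (negbits x) P = #|[set l | ~~ x l && P l]|.
Proof. by apply: eq_card => l; rewrite !inE ffunE. Qed.

Lemma negbitsE x l : negbits x l = ~~ x l.
Proof. by rewrite ffunE. Qed.

Section Move.
Variables (x : bits N) (i j : 'I_N).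
Hypotheses (xi : x i) (nxj : ~~ x j).

Lemma move_bit_neq : i != j.
Proof. by apply/eqP => eij; move: nxj; rewrite -eij xi. Qed.

Lemma move_bit_to : move_bit x i j j.
Proof. by rewrite ffunE eq_sym (negbTE move_bit_neq) eqxx. Qed.

Lemma move_bitK : move_bit (move_bit x i j) j i = x.
Proof.
apply/ffunP => l; rewrite !ffunE.
case: (eqVneq l j) => [->|lj]; first by rewrite (negbTE nxj).
by case: (eqVneq l i) => [->|].
Qed.

Lemma negbits_move_bit : negbits (move_bit x i j) = move_bit (negbits x) j i.
Proof.
apply/ffunP => l; rewrite !ffunE.
case: (eqVneq l i) => [->|li]; first by rewrite (negbTE move_bit_neq).
by case: (eqVneq l j).
Qed.

Lemma wt_in_move_bit P : wt_in (move_bit x i j) P + P i = wt_in x P + P j.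
Proof.
have nij := move_bit_neq.
have split_ij (F : 'I_N -> nat) :
    \sum_l F l = F i + F j + \sum_(l | (l != i) && (l != j)) F l.
  by rewrite (bigD1 i) //= (bigD1 j) 1?eq_sym //= addnA.
rewrite !wt_inE !split_ij !ffunE eqxx eq_sym (negbTE nij) eqxx xi (negbTE nxj) /=.
under eq_bigr => l /andP [li lj] do rewrite ffunE (negbTE li) (negbTE lj).
by case: (P i); case: (P j); rewrite /=; lia.
Qed.

End Move.

Lemma wt_in_negbits_move_bit x i j P : x i -> ~~ x j ->
  wt_in (negbits (move_bit x i j)) P + P j = wt_in (negbits x) P + P i.
Proof.
move=> xi nxj; rewrite negbits_move_bit //.
by apply: wt_in_move_bit; rewrite negbitsE ?xi.
Qed.

Lemma move_bit_from x i j : ~~ move_bit x i j i.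
Proof. by rewrite ffunE eqxx. Qed.

End MoveBit.

Section PairWeights.
Variables (R : realType) (N : nat).
Implicit Types (x y q : bits N) (i j l : 'I_N).

Definition inq q : pred 'I_N := fun l => q l.
Definition outq q : pred 'I_N := fun l => ~~ q l.

(* Number of [move_bit x i j] that lower (resp. raise) wt (x /\ q) by one. *)
Definition nbr_down x q : R := (wt_in x (inq q) * wt_in (negbits x) (outq q))%:R.
Definition nbr_up x q : R := (wt_in x (outq q) * wt_in (negbits x) (inq q))%:R.

Definition oracle_dist x y q : R := Num.sqrt (oracle_gap (pr0 R x q) (pr0 R y q)).

(* Adversary weights of query q on the side of x of the pair (x, move_bit x i j).
   The ratio of neighbour counts balances the two sides: their weights multiply
   to the oracle gap, while on each side they sum to O(k^-1/4) times the number
   of neighbours. *)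
Definition weight_down x i j q : R :=
  if q i && ~~ q j then
    oracle_dist x (move_bit x i j) q * Num.sqrt (nbr_up (move_bit x i j) q / nbr_down x q)
  else 0.

Definition weight_up x i j q : R :=
  if ~~ q i && q j then
    oracle_dist x (move_bit x i j) q * Num.sqrt (nbr_down (move_bit x i j) q / nbr_up x q)
  else 0.

Definition pair_weight x i j q : R := weight_down x i j q + weight_up x i j q.

Lemma pair_weight_ge0 x i j q : 0 <= pair_weight x i j q.
Proof.
by rewrite /pair_weight /weight_down /weight_up addr_ge0 //; case: ifP => _ //;
   rewrite mulr_ge0 ?sqrtr_ge0.
Qed.

Lemma oracle_distC x y q : oracle_dist x y q = oracle_dist y x q.
Proof. by rewrite /oracle_dist oracle_gapC. Qed.

Lemma oracle_dist_sqr x y q :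
  oracle_dist x y q * oracle_dist x y q = oracle_gap (pr0 R x q) (pr0 R y q).
Proof. by rewrite /oracle_dist -expr2 sqr_sqrtr // rot_gap_ge0. Qed.

Lemma sqrt_divK (a b : R) : 0 < a -> 0 < b -> Num.sqrt (a / b) * Num.sqrt (b / a) = 1.
Proof.
move=> a0 b0; rewrite -sqrtrM ?divr_ge0 ?ltW //.
by rewrite mulrA divfK ?gt_eqF // mulfV ?gt_eqF // sqrtr1.
Qed.

Lemma pair_weight_mul x i j q : x i -> ~~ x j ->
  oracle_gap (pr0 R x q) (pr0 R (move_bit x i j) q) <=
  pair_weight x i j q * pair_weight (move_bit x i j) j i q.
Proof.
move=> xi nxj; set y := move_bit x i j.
have yj : y j := move_bit_to xi nxj; have nyi : ~~ y i := move_bit_from x i j.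
have qwt : q i = q j -> pr0 R y q = pr0 R x q.
  move=> qij; have := wt_in_move_bit xi nxj (inq q); rewrite /inq qij => e.
  by rewrite !pr0E /wtand /y; congr prob0; move: e; rewrite /wt_in; lia.
have pos l l' (z : bits N) (P P' : pred 'I_N) : z l -> P l -> ~~ z l' -> P' l' ->
    (0 : R) < (wt_in z P * wt_in (negbits z) P')%:R.
  move=> zl Pl nzl' Pl'; rewrite ltr0n muln_gt0 (wt_in_gt0 zl Pl).
  by rewrite (@wt_in_gt0 _ _ _ l') // negbitsE.
rewrite /pair_weight /weight_down /weight_up (move_bitK xi nxj) -/y.
case qi: (q i); case qj: (q j) => /=; rewrite ?addr0 ?add0r.
- by rewrite qwt ?qi ?qj // oracle_gapxx ?pr0_range // mulr0.
- rewrite mulrACA (oracle_distC y) oracle_dist_sqr sqrt_divK ?mulr1 //.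
    by apply: (pos j i); rewrite /inq /outq ?qi ?qj.
  by apply: (pos i j); rewrite /inq /outq ?qi ?qj.
- rewrite mulrACA (oracle_distC y) oracle_dist_sqr sqrt_divK ?mulr1 //.
    by apply: (pos j i); rewrite /inq /outq ?qi ?qj.
  by apply: (pos i j); rewrite /inq /outq ?qi ?qj.
- by rewrite qwt ?qi ?qj // oracle_gapxx ?pr0_range // mulr0.
Qed.

End PairWeights.

Section ClassBound.
Variable R : realType.

Lemma sqr_quarter_root_bound (K M : R) : 0 < K ->
  (2 / Num.sqrt (Num.sqrt K) * (K * M)) ^+ 2 = 4 * K * Num.sqrt K * M ^+ 2.
Proof.
move=> K0; have sK0 : 0 < Num.sqrt K by rewrite sqrtr_gt0.
have KE : K ^+ 2 = K * Num.sqrt K ^+ 2 by rewrite sqr_sqrtr ?ltW // expr2.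
rewrite !exprMn exprVn sqr_sqrtr ?ltW // KE.
by field; rewrite gt_eqF.
Qed.

(* A class of P * Q neighbours, each of weight sqrt D * sqrt (P' Q' / (P Q)). *)
Lemma weight_class_bound (P Q P' Q' e K M : nat) (D : R) :
  (0 < P)%N -> (0 < Q)%N -> (0 < K)%N -> 0 <= D ->
  D * Num.sqrt e%:R <= 4 -> (e <= K)%N -> (P * P' <= e * K)%N -> (Q * Q' <= M * M)%N ->
  (P * Q)%:R * (Num.sqrt D * Num.sqrt ((P' * Q')%:R / (P * Q)%:R))
    <= 2 / Num.sqrt (Num.sqrt K%:R) * (K%:R * M%:R).
Proof.
move=> P0 Q0 K0 D0 hD eK hP hQ.
have PQ0 : (0 : R) < (P * Q)%:R by rewrite ltr0n muln_gt0 P0.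
have lhsE : (P * Q)%:R * (Num.sqrt D * Num.sqrt ((P' * Q')%:R / (P * Q)%:R))
    = Num.sqrt (D * (P * P')%:R * (Q * Q')%:R) :> R.
  have sPQ : (P * Q)%:R = Num.sqrt ((P * Q)%:R ^+ 2) :> R by rewrite sqrtr_sqr ger0_norm.
  rewrite [X in X * _]sPQ -!sqrtrM ?sqr_ge0 ?ler0n //.
  by congr Num.sqrt; rewrite !natrM; field; rewrite !pnatr_eq0 -!lt0n P0 Q0.
rewrite lhsE -ler_sqr ?nnegrE ?sqrtr_ge0 ?mulr_ge0 ?invr_ge0 ?sqrtr_ge0 ?ler0n //.
rewrite sqr_sqrtr ?mulr_ge0 ?ler0n // sqr_quarter_root_bound ?ltr0n //.
apply: ler_pM; rewrite ?mulr_ge0 ?ler0n //; last by rewrite expr2 -natrM ler_nat.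
have se := sqrtr_ge0 (e%:R : R); have hse := sqr_sqrtr (ler0n R e).
have seK : Num.sqrt e%:R <= Num.sqrt K%:R :> R by rewrite ler_sqrt ?ler0n // ler_nat.
have De : D * e%:R <= 4 * Num.sqrt K%:R.
  rewrite -hse expr2 mulrA; apply: (le_trans (ler_wpM2r se hD)); lra.
have hP' : (P * P')%:R <= e%:R * K%:R :> R by rewrite -natrM ler_nat.
apply: (le_trans (ler_wpM2l D0 hP')); rewrite mulrA.
have := ler_wpM2r (ler0n R K) De; rewrite [4 * K%:R * _]mulrAC; exact.
Qed.

End ClassBound.

Section SumPairWeights.
Variables (R : realType) (N : nat).
Implicit Types (x q : bits N) (i j : 'I_N).

Lemma sum_const_card (P : pred 'I_N) (c : R) : \sum_(j | P j) c = #|[set j | P j]|%:R * c.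
Proof.
rewrite (eq_bigl (fun j => j \in [set j | P j])) => [|j]; last by rewrite inE.
by rewrite sumr_const mulr_natl.
Qed.

Lemma sum_block_const (F : 'I_N -> 'I_N -> R) (a b c d : pred 'I_N) (c0 : R) :
  (forall i j, a i -> b i -> c j -> d j -> F i j = c0) ->
  \sum_(i | a i) \sum_(j | c j) (if b i && d j then F i j else 0) =
    (#|[set i | a i && b i]| * #|[set j | c j && d j]|)%:R * c0.
Proof.
move=> Fc0; rewrite (bigID b) /= [X in _ + X]big1 ?addr0 => [|i /andP [_ /negbTE ->]];
  last by rewrite big1.
rewrite (eq_bigr (fun i => \sum_(j | c j && d j) c0)) => [|i /andP [ai bi]].
  by rewrite !sum_const_card mulrA natrM.
rewrite (bigID d) /= [X in _ + X]big1 ?addr0 => [|j /andP [_ /negbTE ->]];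
  last by rewrite andbF.
by apply: eq_bigr => j /andP [cj dj]; rewrite bi dj Fc0.
Qed.

Lemma wt_in_inq_outq x q : (wt_in x (inq q) + wt_in x (outq q))%N = wt_in x predT.
Proof. by rewrite -(wt_in_split x (inq q)); congr addn; apply: wt_in_ext. Qed.

Local Notation K x := (wt_in x predT).
Local Notation M x := (wt_in (negbits x) predT).
Local Notation bound x := (2 / Num.sqrt (Num.sqrt (K x)%:R) * ((K x)%:R * (M x)%:R) : R).

Lemma bound_ge0 x : 0 <= bound x.
Proof. by rewrite !mulr_ge0 ?invr_ge0 ?sqrtr_ge0 ?ler0n. Qed.

Lemma sum_weight_down x q : (0 < K x)%N ->
  \sum_(i | x i) \sum_(j | ~~ x j) weight_down R x i j q <= bound x.
Proof.
move=> K0; have e12 := wt_in_inq_outq x q; have e34 := wt_in_inq_outq (negbits x) q.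
set A1 := wt_in x (inq q) in e12 *; set A2 := wt_in x (outq q) in e12 *.
set A3 := wt_in (negbits x) (inq q) in e34 *; set A4 := wt_in (negbits x) (outq q) in e34 *.
rewrite (@sum_block_const _ (fun i => x i) (fun i => q i) (fun j => ~~ x j) (fun j => ~~ q j)
    (Num.sqrt (oracle_gap (prob0 R A1) (prob0 R A1.-1)) *
     Num.sqrt ((A2.+1 * A3.+1)%:R / (A1 * A4)%:R))); last first.
  move=> i j xi qi nxj nqj.
  have h1 := wt_in_move_bit xi nxj (inq q); have h2 := wt_in_move_bit xi nxj (outq q).
  have h3 := wt_in_negbits_move_bit (inq q) xi nxj.
  rewrite /inq /outq /wt_in /= qi (negbTE nqj) /= in h1 h2 h3.
  rewrite /oracle_dist !pr0E /nbr_up /nbr_down /wtand /A1 /A2 /A3 /A4 /inq /outq /wt_in /=.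
  by congr (Num.sqrt (oracle_gap _ (prob0 R _)) * Num.sqrt ((_ * _)%:R / _)); lia.
have -> : #|[set i | x i && q i]| = A1 by [].
rewrite -wt_in_negbits -/A4.
have [A10|A1p] := posnP A1; first by rewrite A10 mul0n mul0r bound_ge0.
have [A40|A4p] := posnP A4; first by rewrite A40 muln0 mul0r bound_ge0.
apply: (weight_class_bound (e := A1)) => //; try nia; first exact: rot_gap_ge0.
by have := oracle_gap_prob0S R A1.-1; rewrite prednK // oracle_gapC.
Qed.

Lemma sum_weight_up x q : (0 < K x)%N ->
  \sum_(i | x i) \sum_(j | ~~ x j) weight_up R x i j q <= bound x.
Proof.
move=> K0; have e12 := wt_in_inq_outq x q; have e34 := wt_in_inq_outq (negbits x) q.
set A1 := wt_in x (inq q) in e12 *; set A2 := wt_in x (outq q) in e12 *.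
set A3 := wt_in (negbits x) (inq q) in e34 *; set A4 := wt_in (negbits x) (outq q) in e34 *.
rewrite (@sum_block_const _ (fun i => x i) (fun i => ~~ q i) (fun j => ~~ x j) (fun j => q j)
    (Num.sqrt (oracle_gap (prob0 R A1) (prob0 R A1.+1)) *
     Num.sqrt ((A1.+1 * A4.+1)%:R / (A2 * A3)%:R))); last first.
  move=> i j xi nqi nxj qj.
  have h1 := wt_in_move_bit xi nxj (inq q); have h2 := wt_in_move_bit xi nxj (outq q).
  have h3 := wt_in_negbits_move_bit (outq q) xi nxj.
  rewrite /inq /outq /wt_in /= qj (negbTE nqi) /= in h1 h2 h3.
  rewrite /oracle_dist !pr0E /nbr_up /nbr_down /wtand /A1 /A2 /A3 /A4 /inq /outq /wt_in /=.
  by congr (Num.sqrt (oracle_gap _ (prob0 R _)) * Num.sqrt ((_ * _)%:R / _)); lia.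
have -> : #|[set i | x i && ~~ q i]| = A2 by [].
rewrite -wt_in_negbits -/A3.
have [A20|A2p] := posnP A2; first by rewrite A20 mul0n mul0r bound_ge0.
have [A30|A3p] := posnP A3; first by rewrite A30 muln0 mul0r bound_ge0.
apply: (weight_class_bound (e := A1.+1)) => //; try nia; first exact: rot_gap_ge0.
exact: oracle_gap_prob0S.
Qed.

Lemma sum_pair_weight x q : (0 < K x)%N ->
  \sum_(i | x i) \sum_(j | ~~ x j) pair_weight R x i j q <=
  4 / Num.sqrt (Num.sqrt (K x)%:R) * ((K x)%:R * (M x)%:R).
Proof.
move=> K0; rewrite /pair_weight; under eq_bigr => i _ do rewrite big_split /=.
have -> : (4 : R) = 2 + 2 by lra.
rewrite big_split /= mulrDl mulrDl.
by apply: lerD; [exact: sum_weight_down | exact: sum_weight_up].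
Qed.

End SumPairWeights.

Section AdjacentPairs.
Variables (N K : nat).

(* (x, i, j) stands for the pair (x, move_bit x i j) of weight-K inputs;
   [flip] exchanges the two roles (and is the identity on other triples). *)
Definition triple := (bits N * 'I_N * 'I_N)%type.

Definition adjacent (p : triple) : bool :=
  [&& wt_in p.1.1 predT == K, p.1.1 p.1.2 & ~~ p.1.1 p.2].

Definition flip (p : triple) : triple :=
  if adjacent p then (move_bit p.1.1 p.1.2 p.2, p.2, p.1.2) else p.

Lemma adjacent_flip p : adjacent (flip p) = adjacent p.
Proof.
rewrite /flip; case: ifP => // /and3P [/eqP wx xi nxj] /=.
have := wt_in_move_bit xi nxj predT; rewrite /adjacent /= move_bit_to // move_bit_from.
by rewrite andbT => e; apply/eqP; lia.
Qed.

Lemma flipK : involutive flip.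
Proof.
move=> p; case adj: (adjacent p); last by rewrite /flip adj adj.
rewrite {1}/flip adjacent_flip adj /flip adj /=.
by case/and3P: adj => _ xi nxj; case: p xi nxj => [[x i] j] /= xi nxj; rewrite move_bitK.
Qed.

Lemma sum_flip (R : realType) (F : triple -> R) :
  \sum_(p | adjacent p) F (flip p) = \sum_(p | adjacent p) F p.
Proof.
rewrite [RHS](reindex_inj (can_inj flipK)) /=.
by apply: eq_bigl => p; rewrite adjacent_flip.
Qed.

Lemma sum_adjacent (R : realType) (F : triple -> R) :
  \sum_(p | adjacent p) F p =
  \sum_(x : bits N | wt_in x predT == K) \sum_(i | x i) \sum_(j | ~~ x j) F (x, i, j).
Proof.
rewrite big_mkcond (eq_bigr (fun p : triple => if adjacent (p.1, p.2) then F (p.1, p.2) else 0));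
  last by case.
rewrite -(pair_bigA _ (fun xi j => if adjacent (xi, j) then F (xi, j) else 0)) /=.
rewrite (eq_bigr (fun xi : bits N * 'I_N => \sum_(j : 'I_N)
    if adjacent ((xi.1, xi.2), j) then F ((xi.1, xi.2), j) else 0)); last by case.
rewrite -(pair_bigA _ (fun x i => \sum_(j : 'I_N)
    if adjacent ((x, i), j) then F ((x, i), j) else 0)) /=.
rewrite [RHS]big_mkcond; apply: eq_bigr => x _.
case: ifP => wx; last by rewrite big1 // => i _; rewrite big1 // => j _; rewrite /adjacent /= wx.
rewrite [RHS]big_mkcond; apply: eq_bigr => i _.
case: ifP => xi; last by rewrite big1 // => j _; rewrite /adjacent /= xi andbF.
by rewrite [RHS]big_mkcond; apply: eq_bigr => j _; rewrite /adjacent /= wx xi.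
Qed.

End AdjacentPairs.

Section Progress.
Variables (R : realType) (N W K T : nat) (U : nat -> op R N W).
Hypothesis U_unitary : forall i, (i <= T)%N -> unitary (U i).
Hypothesis K_gt0 : (0 < K)%N.

Definition npairs : R :=
  \sum_(x : bits N | wt_in x predT == K) (K * wt_in (negbits x) predT)%:R.

Definition progress t : R :=
  \sum_(p : triple N | adjacent K p) dotr (run p.1.1 U t) (run (flip K p).1.1 U t).

Definition query_gain : R := 4 / Num.sqrt (Num.sqrt K%:R).

Definition weighted_mass t (p : triple N) : R :=
  \sum_(q : bits N) \sum_(z : 'I_W.+1)
    pair_weight R p.1.1 p.1.2 p.2 q * block_norm (run p.1.1 U t) q z.

Lemma npairsE : \sum_(p : triple N | adjacent K p) 1 = npairs.
Proof.
rewrite (@sum_adjacent N K); apply: eq_bigr => x /eqP wx.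
under eq_bigr => i _ do rewrite sum_const_card mulr1.
rewrite sum_const_card -natrM -wx; congr (_ * _)%:R; apply: eq_card => l.
  by rewrite !inE andbT.
by rewrite !inE ffunE andbT.
Qed.

Lemma progress0 : progress 0 = npairs.
Proof.
rewrite -npairsE; apply: eq_bigr => p _.
by apply: dotr_run => i; rewrite leqn0 => /eqP ->; apply: U_unitary.
Qed.

Lemma run_unitary t : (t <= T)%N -> forall i, (i <= t)%N -> unitary (U i).
Proof. by move=> tT i it; apply: U_unitary; apply: leq_trans tT. Qed.

Lemma dotr_pair_step t p : (t < T)%N -> adjacent K p ->
  2 * `|dotr (run p.1.1 U t.+1) (run (flip K p).1.1 U t.+1) -
        dotr (run p.1.1 U t) (run (flip K p).1.1 U t)|
  <= weighted_mass t p + weighted_mass t (flip K p).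
Proof.
move=> tT adj; have /and3P [_ xi nxj] := adj.
have -> : flip K p = (move_bit p.1.1 p.1.2 p.2, p.2, p.1.2) by rewrite /flip adj.
rewrite /= dotr_unitary; last exact: U_unitary.
apply: (le_trans (dotr_oracle_change _ _ (pair_weight_ge0 R _ _ _)
  (pair_weight_ge0 R _ _ _) (fun q => pair_weight_mul R q xi nxj))).
by rewrite /weighted_mass -big_split /=; apply: ler_sum => q _; rewrite -big_split.
Qed.

Lemma sum_weighted_mass t : (t <= T)%N ->
  \sum_(p | adjacent K p) weighted_mass t p <= query_gain * npairs.
Proof.
move=> tT; rewrite (@sum_adjacent N K) /npairs mulr_sumr; apply: ler_sum => x /eqP wx.
rewrite /weighted_mass /=.
have -> : \sum_(i | x i) \sum_(j | ~~ x j) \sum_(q : bits N) \sum_(z : 'I_W.+1)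
       pair_weight R x i j q * block_norm (run x U t) q z =
     \sum_(q : bits N) (\sum_(i | x i) \sum_(j | ~~ x j) pair_weight R x i j q) *
          \sum_(z : 'I_W.+1) block_norm (run x U t) q z.
  under eq_bigr => i _ do under eq_bigr => j _ do under eq_bigr => q _ do rewrite -mulr_sumr.
  under eq_bigr => i _ do rewrite exchange_big /=.
  rewrite exchange_big /=; apply: eq_bigr => q _.
  by rewrite mulr_suml; apply: eq_bigr => i _; rewrite mulr_suml.
apply: (le_trans (y := \sum_(q : bits N) query_gain * (K * wt_in (negbits x) predT)%:R *
          \sum_(z : 'I_W.+1) block_norm (run x U t) q z)).
  apply: ler_sum => q _; apply: ler_wpM2r; first by apply: sumr_ge0 => z _; apply: block_norm_ge0.
  by have := sum_pair_weight R q (_ : (0 < wt_in x predT)%N); rewrite wx natrM mulrA; apply.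
by rewrite -mulr_sumr -dotr_block_norm dotr_run ?mulr1 //; apply: run_unitary.
Qed.

Lemma progress_step t : (t < T)%N -> `|progress t.+1 - progress t| <= query_gain * npairs.
Proof.
move=> tT; rewrite -(ler_pM2l (_ : (0 : R) < 2)) // /progress -sumrB.
apply: le_trans (ler_wpM2l _ (ler_norm_sum _ _ _)) _ => //; rewrite mulr_sumr.
apply: le_trans (ler_sum _ (fun p => dotr_pair_step tT)) _.
rewrite big_split /= sum_flip (_ : 2 * (query_gain * npairs) =
  query_gain * npairs + query_gain * npairs); last by ring.
by apply: lerD; apply: sum_weighted_mass; apply: ltnW.
Qed.

Lemma progress_drop t : (t <= T)%N -> npairs - progress t <= t%:R * (query_gain * npairs).
Proof.
elim: t => [|t IH] tT; first by rewrite progress0 subrr mul0r.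
have := IH (ltnW tT); have := progress_step tT.
have := ler_norm (progress t - progress t.+1); rewrite distrC -natr1; lra.
Qed.

Variable out : basis N W -> bits N.
Hypothesis success : forall x : bits N, wt x = K -> 2 / 3 <= success_prob x U T out.

Lemma progressT : progress T <= 17/18 * npairs.
Proof.
rewrite /progress -npairsE mulr_sumr; apply: ler_sum => p adj.
have /and3P [/eqP wx xi nxj] := adj.
have -> : flip K p = (move_bit p.1.1 p.1.2 p.2, p.2, p.1.2) by rewrite /flip adj.
rewrite mulr1; apply: (dotr_le_of_distinguished (out := out) (x := p.1.1)
  (y := move_bit p.1.1 p.1.2 p.2)); rewrite ?dotr_run //.
- by apply/eqP => e; have := move_bit_from p.1.1 p.1.2 p.2; rewrite -e xi.
- by apply: success; rewrite wt_wt_in.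
apply: success; rewrite wt_wt_in.
by have := wt_in_move_bit xi nxj predT; rewrite /= wx => /eqP; rewrite eqn_add2r => /eqP.
Qed.

End Progress.

Lemma exists_wt_in (N K : nat) : (K < N)%N ->
  exists x : bits N, wt_in x predT = K /\ (0 < wt_in (negbits x) predT)%N.
Proof.
move=> KN; exists [ffun l : 'I_N => (l < K)%N]; split; last first.
  by apply: (@wt_in_gt0 _ _ _ (Ordinal KN)); rewrite // negbitsE ffunE ltnn.
rewrite wt_inE (eq_bigr (fun l : 'I_N => ((l < K)%N : nat))) => [|l _]; last first.
  by rewrite ffunE andbT.
rewrite -(big_mkord xpredT (fun l => ((l < K)%N : nat))) (big_cat_nat _ (n := K)) //=;
  last exact: ltnW.
rewrite [X in (_ + X)%N]big1_seq ?addn0 => [|l /andP [_]]; last first.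
  by rewrite mem_index_iota => /andP [lK _]; rewrite ltnNge lK.
rewrite (eq_big_nat _ _ (F2 := fun _ => 1%N)) => [|l /andP [_ ->]] //.
by rewrite sum_nat_const_nat subn0 muln1.
Qed.

Lemma npairs_gt0 (R : realType) (N K : nat) : (0 < K)%N -> (K < N)%N -> 0 < npairs R N K.
Proof.
move=> K0 KN; have [x0 [wx0 mx0]] := exists_wt_in KN.
rewrite /npairs (bigD1 x0) /=; last by rewrite wx0.
by rewrite ltr_pwDl ?ltr0n ?muln_gt0 ?K0 // sumr_ge0 // => x _; rewrite ler0n.
Qed.

Theorem theorem4 (R : realType) :
  exists c : R, 0 < c /\
  forall (N k : nat), (1 <= k)%N -> (2 * k < N)%N ->
  forall (W T : nat) (U : nat -> op R N W) (out : basis N W -> bits N),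
    (forall i, (i <= T)%N -> unitary (U i)) ->
    (forall x : bits N, wt x = k -> 2 / 3 <= success_prob x U T out) ->
    c * Num.sqrt (Num.sqrt (k%:R)) <= T%:R.
Proof.
exists (1/72); split=> [|N k k1 kN W T U out HU Hs]; first by rewrite divr_gt0.
have P0 : 0 < npairs R N k by apply: npairs_gt0; lia.
have drop := progress_drop HU k1 (leqnn T); have final := progressT HU Hs.
have gain : 1 / 18 <= T%:R * query_gain R k.
  by rewrite -(ler_pM2r P0) mul1r -mulrA; lra.
have s0 : 0 < Num.sqrt (Num.sqrt (k%:R : R)) by rewrite !sqrtr_gt0 ltr0n.
move: gain; rewrite /query_gain mulrA ler_pdivlMr // mul1r; lra.
Qed.
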